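(* Let $(X,d)$ be a complete metric space with $|X|\geqslant 3$ and let $T\colon X\to X$ be continuous and asymptotically regular. Suppose there exist $\alpha\in[0,\frac12)$ and a function $F\colon[0,\infty)^3\to[0,\infty)$ with $F(0,0,0)=0$ and $F$ continuous at $(0,0,0)$, such that $$d(Tx,Ty)+d(Ty,Tz)+d(Tx,Tz)\leqslant \alpha\big(d(x,y)+d(y,z)+d(z,x)\big)+F\big(d(x,Tx),d(y,Ty),d(z,Tz)\big)$$ for all pairwise distinct $x,y,z\in X$. Then $T$ has a fixed point, and $T$ has at most two fixed points.
   Context: A mapping $T\colon X\to X$ on a metric space is asymptotically regular if $\lim_{n\to\infty}d(T^{n+1}x,T^nx)=0$ for every $x\in X$. *)

From Stdlib Require Import Reals.
Open Scope R_scope.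

Definition is_metric {X : Type} (d : X -> X -> R) : Prop :=
  (forall x y, 0 <= d x y) /\
  (forall x y, d x y = 0 <-> x = y) /\
  (forall x y, d x y = d y x) /\
  (forall x y z, d x z <= d x y + d y z).

Definition seq_converges {X : Type} (d : X -> X -> R) (u : nat -> X) (l : X) : Prop :=
  forall eps, 0 < eps -> exists N, forall n, (N <= n)%nat -> d (u n) l < eps.

Definition cauchy_seq {X : Type} (d : X -> X -> R) (u : nat -> X) : Prop :=
  forall eps, 0 < eps -> exists N, forall m n, (N <= m)%nat -> (N <= n)%nat ->
    d (u m) (u n) < eps.

Definition complete_metric {X : Type} (d : X -> X -> R) : Prop :=
  forall u : nat -> X, cauchy_seq d u -> exists l, seq_converges d u l.

Definition metric_continuous {X : Type} (d : X -> X -> R) (T : X -> X) : Prop :=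
  forall x eps, 0 < eps -> exists delta, 0 < delta /\
    forall y, d x y < delta -> d (T x) (T y) < eps.

Fixpoint iter {X : Type} (n : nat) (T : X -> X) (x : X) : X :=
  match n with O => x | S k => T (iter k T x) end.

Definition asymptotically_regular {X : Type} (d : X -> X -> R) (T : X -> X) : Prop :=
  forall x eps, 0 < eps -> exists N, forall n, (N <= n)%nat ->
    Rabs (d (iter (S n) T x) (iter n T x)) < eps.

Definition cont_at_origin (F : R -> R -> R -> R) : Prop :=
  forall eps, 0 < eps -> exists delta, 0 < delta /\
    forall a b c, 0 <= a < delta -> 0 <= b < delta -> 0 <= c < delta ->
      Rabs (F a b c - F 0 0 0) < eps.

(* Applied to the triple (x, T x, y), the three-point inequality and the
   triangle inequality give
     (1 - 2 alpha) d(x, y) <= 2 d(x, T x) + d(y, T y) + F(d(x, T x), d(T x, T^2 x), d(y, T y)),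
   so along an orbit on which consecutive points differ, asymptotic regularity
   and the continuity of F at the origin make the orbit Cauchy; by continuity
   of T its limit is a fixed point.  Three distinct fixed points would give
   D <= alpha D for the positive perimeter D of the triangle they span. *)

From Stdlib Require Import Reals Lra Psatz Classical.
Open Scope R_scope.

Lemma F_small_near_origin (F : R -> R -> R -> R) :
  cont_at_origin F -> F 0 0 0 = 0 ->
  forall eps, 0 < eps -> exists delta, 0 < delta /\
    forall a b c, 0 <= a < delta -> 0 <= b < delta -> 0 <= c < delta ->
      F a b c < eps.
Proof.
  intros Hcont HF0 eps Heps.
  destruct (Hcont eps Heps) as [delta [Hdelta Hclose]].
  exists delta; split; [exact Hdelta |].
  intros a b c Ha Hb Hc.
  specialize (Hclose a b c Ha Hb Hc).
  rewrite HF0, Rminus_0_r in Hclose.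
  pose proof (Rle_abs (F a b c)); lra.
Qed.

Section MetricSpace.

Variables (X : Type) (d : X -> X -> R).
Hypothesis d_metric : is_metric d.

Lemma dist_nonneg (x y : X) : 0 <= d x y.
Proof. apply d_metric. Qed.

Lemma dist_self (x : X) : d x x = 0.
Proof. apply d_metric; reflexivity. Qed.

Lemma dist_sym (x y : X) : d x y = d y x.
Proof. apply d_metric. Qed.

Lemma dist_triangle (x y z : X) : d x z <= d x y + d y z.
Proof. apply d_metric. Qed.

Lemma dist_pos (x y : X) : x <> y -> 0 < d x y.
Proof.
  intros Hxy.
  destruct (dist_nonneg x y) as [Hpos | Hzero]; [exact Hpos |].
  exfalso; apply Hxy, d_metric; now symmetry.
Qed.

Lemma eq_of_dist_lt_all (x y : X) :
  (forall eps, 0 < eps -> d x y < eps) -> x = y.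
Proof.
  intros Hsmall.
  apply NNPP; intros Hxy.
  pose proof (Hsmall _ (dist_pos x y Hxy)); lra.
Qed.

Lemma orbit_step_small (T : X -> X) :
  asymptotically_regular d T ->
  forall x eps, 0 < eps ->
    exists N, forall n, (N <= n)%nat -> d (iter n T x) (iter (S n) T x) < eps.
Proof.
  intros Hreg x eps Heps.
  destruct (Hreg x eps Heps) as [N HN].
  exists N; intros n Hn.
  specialize (HN n Hn).
  rewrite Rabs_pos_eq in HN by apply dist_nonneg.
  now rewrite dist_sym.
Qed.

Lemma orbit_limit_is_fixed (T : X -> X) (x l : X) :
  metric_continuous d T -> seq_converges d (fun n => iter n T x) l -> T l = l.
Proof.
  intros Hcont Hconv.
  symmetry; apply eq_of_dist_lt_all; intros eps Heps.
  destruct (Hcont l (eps / 2)) as [delta [Hdelta Himage]]; [lra |].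
  destruct (Hconv (Rmin delta (eps / 2))) as [N HN];
    [apply Rmin_glb_lt; lra |].
  cbv beta in HN.
  pose proof (Rmin_l delta (eps / 2)); pose proof (Rmin_r delta (eps / 2)).
  pose proof (HN (S N) (le_S _ _ (le_n N))) as Hnext.
  assert (Himage_N : d (T l) (iter (S N) T x) < eps / 2).
  { apply (Himage (iter N T x)). rewrite dist_sym. specialize (HN N (le_n N)). lra. }
  pose proof (dist_triangle l (iter (S N) T x) (T l)).
  pose proof (dist_sym l (iter (S N) T x)).
  pose proof (dist_sym (T l) (iter (S N) T x)).
  lra.
Qed.

Definition three_point_condition (T : X -> X) (alpha : R) (F : R -> R -> R -> R) : Prop :=
  forall x y z : X, x <> y -> y <> z -> x <> z ->
    d (T x) (T y) + d (T y) (T z) + d (T x) (T z)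
      <= alpha * (d x y + d y z + d z x) + F (d x (T x)) (d y (T y)) (d z (T z)).

Section ThreePointMaps.

Variables (T : X -> X) (alpha : R) (F : R -> R -> R -> R).
Hypothesis alpha_range : 0 <= alpha < 1/2.
Hypothesis F_nonneg : forall a b c, 0 <= a -> 0 <= b -> 0 <= c -> 0 <= F a b c.
Hypothesis F_origin : F 0 0 0 = 0.
Hypothesis T_three_point : three_point_condition T alpha F.

Lemma at_most_two_fixed_points (x y z : X) :
  T x = x -> T y = y -> T z = z -> x = y \/ y = z \/ x = z.
Proof.
  intros Hx Hy Hz.
  destruct (classic (x = y)) as [| Hxy]; [now left |].
  destruct (classic (y = z)) as [| Hyz]; [now right; left |].
  destruct (classic (x = z)) as [| Hxz]; [now right; right |].
  exfalso.
  pose proof (T_three_point x y z Hxy Hyz Hxz) as Hineq.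
  rewrite Hx, Hy, Hz, !dist_self, F_origin, (dist_sym z x) in Hineq.
  pose proof (dist_pos x y Hxy).
  pose proof (dist_nonneg y z); pose proof (dist_nonneg x z).
  nra.
Qed.

Lemma dist_le_of_three_point (x y : X) : T x <> x ->
  (1 - 2 * alpha) * d x y
    <= 2 * d x (T x) + d y (T y) + F (d x (T x)) (d (T x) (T (T x))) (d y (T y)).
Proof.
  intros Hmove.
  pose proof (F_nonneg (d x (T x)) (d (T x) (T (T x))) (d y (T y))
                (dist_nonneg _ _) (dist_nonneg _ _) (dist_nonneg _ _)) as HFpos.
  pose proof (dist_nonneg x (T x)); pose proof (dist_nonneg y (T y)).
  destruct (classic (y = x)) as [-> | Hyx].
  { rewrite dist_self; lra. }
  destruct (classic (y = T x)) as [-> | HyTx].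
  { nra. }
  pose proof (T_three_point x (T x) y (not_eq_sym Hmove) (not_eq_sym HyTx)
                (not_eq_sym Hyx)) as Hineq.
  pose proof (dist_triangle x (T x) (T y)).
  pose proof (dist_triangle x (T y) y).
  pose proof (dist_triangle (T x) x y).
  pose proof (dist_nonneg (T (T x)) (T y)); pose proof (dist_nonneg (T x) (T (T x))).
  rewrite (dist_sym (T y) y), (dist_sym (T x) x), (dist_sym y x) in *.
  nra.
Qed.

Lemma orbit_cauchy (x : X) :
  asymptotically_regular d T -> cont_at_origin F ->
  (forall n, T (iter n T x) <> iter n T x) ->
  cauchy_seq d (fun n => iter n T x).
Proof.
  intros Hreg HFcont Hmoves eps Heps.
  set (k := 1 - 2 * alpha).
  assert (Hk : 0 < k) by (unfold k; lra).
  destruct (F_small_near_origin F HFcont F_origin (k * eps / 2)) as [delta [Hdelta HFsmall]];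
    [nra |].
  destruct (orbit_step_small T Hreg x (Rmin delta (k * eps / 8))) as [N HN];
    [apply Rmin_glb_lt; nra |].
  pose proof (Rmin_l delta (k * eps / 8)); pose proof (Rmin_r delta (k * eps / 8)).
  exists N; intros n m Hn Hm; cbv beta.
  pose proof (HN n Hn) as Hstep_n.
  pose proof (HN (S n) ltac:(lia)) as Hstep_Sn.
  pose proof (HN m Hm) as Hstep_m.
  pose proof (dist_le_of_three_point (iter n T x) (iter m T x) (Hmoves n)) as Hbound.
  simpl in Hstep_n, Hstep_Sn, Hstep_m.
  assert (HF : F (d (iter n T x) (T (iter n T x))) (d (T (iter n T x)) (T (T (iter n T x))))
                 (d (iter m T x) (T (iter m T x))) < k * eps / 2).
  { apply HFsmall; split; try apply dist_nonneg; lra. }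
  fold k in Hbound; clearbody k.
  apply (Rmult_lt_reg_l k); [exact Hk | nra].
Qed.

End ThreePointMaps.

End MetricSpace.

Theorem theorem4p5 (X : Type) (d : X -> X -> R) (T : X -> X)
  (alpha : R) (F : R -> R -> R -> R) :
  is_metric d ->
  complete_metric d ->
  (exists x y z : X, x <> y /\ y <> z /\ x <> z) ->
  metric_continuous d T ->
  asymptotically_regular d T ->
  0 <= alpha < 1/2 ->
  (forall a b c, 0 <= a -> 0 <= b -> 0 <= c -> 0 <= F a b c) ->
  F 0 0 0 = 0 ->
  cont_at_origin F ->
  (forall x y z : X, x <> y -> y <> z -> x <> z ->
     d (T x) (T y) + d (T y) (T z) + d (T x) (T z)
       <= alpha * (d x y + d y z + d z x) + F (d x (T x)) (d y (T y)) (d z (T z))) ->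
  (exists x, T x = x) /\
  (forall x y z : X, T x = x -> T y = y -> T z = z -> x = y \/ y = z \/ x = z).
Proof.
  intros Hd Hcomplete [x0 _] Hcont Hreg Halpha HFnonneg HF0 HFcont Hthree.
  split; [| exact (at_most_two_fixed_points X d Hd T alpha F Halpha HF0 Hthree)].
  destruct (classic (exists n, T (iter n T x0) = iter n T x0)) as [[n Hfix] | Hmoves].
  - now exists (iter n T x0).
  - assert (Hcauchy : cauchy_seq d (fun n => iter n T x0)).
    { apply (orbit_cauchy X d Hd T alpha F Halpha HFnonneg HF0 Hthree x0 Hreg HFcont).
      intros n Hfix; apply Hmoves; now exists n. }
    destruct (Hcomplete _ Hcauchy) as [l Hl].
    exists l; exact (orbit_limit_is_fixed X d Hd T x0 l Hcont Hl).
Qed.
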